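(* Let $M_G$ be an $n$-vertex mixed graph. Then $\rho(M_G)<\sqrt3$ if and only if every connected component of $M_G$ is switching equivalent to one of $P_1,P_2,P_3,P_4$ or $C_4^{=}$.
   Context: A mixed graph $M_G$ is obtained from a finite simple graph $G$ by orienting the edges of some subset of $E(G)$. With $\omega=\frac{1+\mathbf{i}\sqrt3}{2}$, $N(M_G)$ has $(u,v)$-entry $\omega$ if $\overrightarrow{uv}$ is an arc, $\bar\omega$ if $\overrightarrow{vu}$ is an arc, $1$ for an undirected edge, $0$ otherwise; $\rho(M_G)$ is the maximum absolute value of an eigenvalue of $N(M_G)$. $P_k$ is the undirected path on $k$ vertices; $C_4^{=}$ is the mixed $4$-cycle $v_1v_2v_3v_4v_1$ with arcs $\overrightarrow{v_1v_2},\overrightarrow{v_2v_3},\overrightarrow{v_3v_4}$ and undirected edge $\{v_4,v_1\}$. Switching: $\mathbb{T}_6=\{1,-1,\omega,\bar\omega,-\omega,-\bar\omega\}$; given a partition $V=\bigcup_{j\in\mathbb{T}_6}V_j$ into possibly empty sets, an edge or arc $xy$ has type $(j,k)$ if $x\in V_j,y\in V_k$ (arcs directed from $x$ to $y$); the partition is admissible if every undirected edge has type $(j,j)$ or $(j,\omega j)$ and every arc has type $(j,j)$, $(j,\bar\omega j)$ or $(j,-\omega j)$ for some $j$; a three-way switching replaces each undirected edge of type $(j,\omega j)$ by an arc from $V_j$ to $V_{\omega j}$, each arc of type $(j,\bar\omega j)$ by an undirected edge, and reverses each arc of type $(j,-\omega j)$. Two mixed graphs are switching equivalent if one is obtained from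 the other (up to isomorphism) by a sequence of three-way switchings and reversals of all arcs. *)

From HB Require Import structures.
From mathcomp Require Import all_boot all_order all_algebra all_field.
Set Implicit Arguments. Unset Strict Implicit. Unset Printing Implicit Defensive.
Import Order.TTheory GRing.Theory Num.Theory.
Local Open Scope ring_scope.

(* A mixed graph on a finite vertex type T is encoded by the relation
   between each ordered pair of vertices:
   E0   : no edge,   Eund : undirected edge {x,y},
   Efwd : arc x -> y,  Ebwd : arc y -> x. *)
Inductive entry := E0 | Eund | Efwd | Ebwd.

Definition flip_entry (e : entry) : entry :=
  match e with Efwd => Ebwd | Ebwd => Efwd | e => e end.

Definition mgraph (T : finType) := T -> T -> entry.

Definition mixed_wf (T : finType) (g : mgraph T) : Prop :=
  (forall x, g x x = E0) /\ (forall x y, g y x = flip_entry (g x y)).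

Definition madj (T : finType) (g : mgraph T) : rel T :=
  fun x y => match g x y with E0 => false | _ => true end.

Definition omega : algC := (1 + 'i * sqrtC 3) / 2.

Definition entryC (e : entry) : algC :=
  match e with E0 => 0 | Eund => 1 | Efwd => omega | Ebwd => omega^* end.

Definition Nmat (n : nat) (g : mgraph 'I_n) : 'M[algC]_n :=
  \matrix_(i, j) entryC (g i j).

Definition T6 : seq algC := [:: 1; -1; omega; omega^*; - omega; - omega^*].

(* admissibility of a partition, given by the class function c : T -> T_6 *)
Definition admissible (T : finType) (c : T -> algC) (g : mgraph T) : Prop :=
  (forall x, c x \in T6) /\
  forall x y, match g x y with
    | Eund => [|| c y == c x, c y == omega * c x | c x == omega * c y]
    | Efwd => [|| c y == c x, c y == omega^* * c x | c y == - omega * c x]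
    | Ebwd => [|| c x == c y, c x == omega^* * c y | c x == - omega * c y]
    | E0 => true
    end.

Definition three_way (T : finType) (c : T -> algC) (g : mgraph T) : mgraph T :=
  fun x y => match g x y with
    | E0 => E0
    | Eund => if c y == omega * c x then Efwd
              else if c x == omega * c y then Ebwd else Eund
    | Efwd => if c y == omega^* * c x then Eund
              else if c y == - omega * c x then Ebwd else Efwd
    | Ebwd => if c x == omega^* * c y then Eund
              else if c x == - omega * c y then Efwd else Ebwd
    end.

Definition reverse_arcs (T : finType) (g : mgraph T) : mgraph T :=
  fun x y => flip_entry (g x y).

Inductive sw_reach (T : finType) (g : mgraph T) : mgraph T -> Prop :=
  | sw_refl : sw_reach g g
  | sw_three (g' : mgraph T) (c : T -> algC) :
      sw_reach g g' -> admissible c g' -> sw_reach g (three_way c g')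
  | sw_rev (g' : mgraph T) : sw_reach g g' -> sw_reach g (reverse_arcs g').

Definition mg_iso (T1 T2 : finType) (g1 : mgraph T1) (g2 : mgraph T2) : Prop :=
  exists f : T1 -> T2, bijective f /\ forall x y, g2 (f x) (f y) = g1 x y.

Definition sw_equiv (T1 T2 : finType) (g1 : mgraph T1) (g2 : mgraph T2) : Prop :=
  (exists g' : mgraph T1, sw_reach g1 g' /\ mg_iso g' g2) \/
  (exists g' : mgraph T2, sw_reach g2 g' /\ mg_iso g' g1).

Definition comp_vert (n : nat) (g : mgraph 'I_n) (v : 'I_n) :=
  {x : 'I_n | connect (madj g) v x}.

Definition comp_graph (n : nat) (g : mgraph 'I_n) (v : 'I_n)
  : mgraph (comp_vert g v) := fun x y => g (val x) (val y).

Definition Pk (k : nat) : mgraph 'I_k :=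
  fun i j => if (i.+1 == j :> nat) || (j.+1 == i :> nat) then Eund else E0.

(* C_4^= on v1..v4 = 0..3: arcs 0->1, 1->2, 2->3, undirected {3,0} *)
Definition C4eq : mgraph 'I_4 :=
  fun i j => match nat_of_ord i, nat_of_ord j with
    | 0, 1 | 1, 2 | 2, 3 => Efwd
    | 1, 0 | 2, 1 | 3, 2 => Ebwd
    | 3, 0 | 0, 3 => Eund
    | _, _ => E0
    end%N.

Arguments comp_graph {n} g v.
Arguments Pk : clear implicits.

(* [N(M_G)] is the Hermitian matrix of a gain graph whose gains are sixth roots
   of unity, and a three-way switching acts on it as a diagonal similarity with
   a gauge valued in [T6]; hence switching equivalence preserves the spectrum.
   By the spectral theorem, [rho < sqrt 3] fails as soon as some test vector [w]
   satisfies [|wN|^2 >= 3 |w|^2].  With [w] a unit vector this bounds every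
   degree by 2, so each component has a Hamiltonian path and is a path or a
   cycle; gauging the gains along that path to 1 turns it into [P_k] or into the
   [k]-cycle whose last edge carries the product [psi] of the gains around it.
   Explicit test vectors exclude every gained triangle, every gained 4-cycle
   with [psi <> -1] and every path or cycle on five vertices, while [P_1], ...,
   [P_4] and the 4-cycle with [psi = -1], which is [C_4^=], have all their
   eigenvalues below [sqrt 3]. *)

From HB Require Import structures.
From mathcomp Require Import all_boot all_order all_algebra all_field.
From mathcomp Require Import ring zify.
From Stdlib Require Import FunctionalExtensionality.

Set Implicit Arguments.
Unset Strict Implicit.
Unset Printing Implicit Defensive.

Import Order.TTheory GRing.Theory Num.Theory.
Local Open Scope ring_scope.

(** * Sixth roots of unity *)

Lemma omega_sqr : omega ^+ 2 = omega - 1.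
Proof.
rewrite /omega; set t := 'i * sqrtC 3.
have t2 : t ^+ 2 = -3 by rewrite /t exprMn sqrCi sqrtCK mulN1r.
apply/eqP; rewrite -subr_eq0.
have -> : ((1 + t) / 2) ^+ 2 - ((1 + t) / 2 - 1) = (t ^+ 2 + 3) / 4.
  by field; rewrite ?pnatr_eq0.
by rewrite t2 addNr mul0r.
Qed.

Lemma omega_conj : omega^* = 1 - omega.
Proof.
have s3 : (sqrtC 3 : algC)^* = sqrtC 3 by rewrite geC0_conj ?sqrtC_ge0 ?ler0n.
rewrite /omega rmorphM rmorphD /= rmorphM /= conjCi s3 fmorphV /= rmorph_nat rmorph1.
by field; rewrite ?pnatr_eq0.
Qed.

Lemma omega_cube : omega ^+ 3 = -1.
Proof. by rewrite exprS omega_sqr mulrBr mulr1 -expr2 omega_sqr; ring. Qed.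

Lemma omega_conjE : omega^* = omega ^+ 5.
Proof. by rewrite (exprD omega 3 2) omega_cube omega_sqr omega_conj; ring. Qed.

Lemma omega_prim : 6.-primitive_root omega.
Proof.
have cube_neq (r : algC) : r ^+ 3 != -1 -> omega != r.
  by apply: contraNneq => <-; rewrite omega_cube.
apply/andP; split=> //; apply/forallP => -[i ilt]; rewrite /= unity_rootE.
move: ilt; case: i => [|[|[|[|[|[|i]]]]]] //= _; rewrite ?eqbF_neg ?eqb_id.
- by rewrite expr1 cube_neq // expr1n -subr_eq0 opprK -(natrD _ 1 1) pnatr_eq0.
- rewrite omega_sqr subr_eq -(natrD _ 1 1) cube_neq // -natrX.
  by rewrite -subr_eq0 opprK -(natrD _ _ 1) pnatr_eq0.
- by rewrite omega_cube eq_sym -subr_eq0 opprK -(natrD _ 1 1) pnatr_eq0.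
- rewrite (exprD omega 3 1) omega_cube mulN1r expr1 eqr_oppLR; apply/eqP => om.
  move: omega_sqr; rewrite om sqrrN expr1n => /eqP; rewrite eq_sym subr_eq eq_sym.
  by rewrite -subr_eq0 opprK -(natrD _ 1 1) -(natrD _ 2 1) pnatr_eq0.
- rewrite -omega_conjE omega_conj subr_eq addrC -subr_eq subrr eq_sym cube_neq //.
  by rewrite expr0n /= eq_sym oppr_eq0 oner_eq0.
- by rewrite (exprM omega 3 2) omega_cube sqrrN expr1n.
Qed.

Lemma T6_exp k : omega ^+ k \in T6.
Proof.
rewrite (divn_eq k 6) exprD mulnC exprM (prim_expr_order omega_prim) expr1n mul1r.
have : (k %% 6 < 6)%N by rewrite ltn_mod.
move: (k %% 6)%N => [|[|[|[|[|[|//]]]]]] _; rewrite !inE.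
- by rewrite expr0 eqxx.
- by rewrite expr1 eqxx !orbT.
- by rewrite omega_sqr omega_conj opprB eqxx !orbT.
- by rewrite omega_cube eqxx !orbT.
- by rewrite (exprD omega 3 1) omega_cube mulN1r expr1 eqxx !orbT.
- by rewrite -omega_conjE eqxx !orbT.
Qed.

Lemma T6E c : (c \in T6) = (c ^+ 6 == 1).
Proof.
apply/idP/eqP => [|/(prim_rootP omega_prim) [i ->]]; last exact: T6_exp.
have N6 d : (- d) ^+ 6 = d ^+ 6 by rewrite exprNn -signr_odd /= expr0 mul1r.
rewrite !inE => /or4P [/eqP->|/eqP->|/eqP->|/orP[/eqP->|/orP[/eqP->|/eqP->]]];
  by rewrite ?N6 ?expr1n -?rmorphXn ?(prim_expr_order omega_prim) ?rmorph1.
Qed.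

Lemma T6M c d : c \in T6 -> d \in T6 -> c * d \in T6.
Proof. by rewrite !T6E exprMn => /eqP-> /eqP->; rewrite mulr1. Qed.

Lemma T6V c : c \in T6 -> c^-1 \in T6.
Proof. by rewrite !T6E exprVn => /eqP->; rewrite invr1. Qed.

Lemma T6_norm c : c \in T6 -> `|c| = 1.
Proof. by rewrite T6E => c6; apply/eqP; rewrite -(@pexpr_eq1 _ _ 6) // -normrX (eqP c6) normr1. Qed.

Lemma T6_neq0 c : c \in T6 -> c != 0.
Proof. by move/T6_norm => c1; rewrite -normr_eq0 c1 oner_eq0. Qed.

Lemma T6_conjV c : c \in T6 -> c^* = c^-1.
Proof.
move=> cT; apply: (mulfI (T6_neq0 cT)).
by rewrite -normCK T6_norm // expr1n mulfV ?T6_neq0.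
Qed.

Lemma omega_conjM : omega^* * omega = 1.
Proof. by rewrite omega_conj mulrBl mul1r -expr2 omega_sqr; ring. Qed.

Lemma omega_neq0 : omega != 0.
Proof. exact: (T6_neq0 (T6_exp 1)). Qed.

Lemma omega_conj_sqr : omega^* ^+ 2 = - omega.
Proof. by rewrite omega_conj -opprB sqrrN sqrrB1 omega_sqr; ring. Qed.

Lemma T6_trace c : c \in T6 -> [\/ c = -1, c + c^-1 = -1 | 1 <= c + c^-1].
Proof.
move=> cT; rewrite -T6_conjV //; move: cT; rewrite !inE.
move=> /or4P [/eqP->|/eqP->|/eqP->|/orP[/eqP->|/orP[/eqP->|/eqP->]]].
- by apply: Or33; rewrite rmorph1 lerDl ler01.
- by apply: Or31.
- by apply: Or33; rewrite omega_conj addrC subrK.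
- by apply: Or33; rewrite conjCK omega_conj subrK.
- by apply: Or32; rewrite rmorphN /= omega_conj; ring.
- by apply: Or32; rewrite rmorphN /= conjCK omega_conj; ring.
Qed.

(** * Spectra of gain matrices *)

Section Spectrum.
Variable T : finType.
Implicit Types (A B : T -> T -> algC) (v c : T -> algC) (a : algC).

Definition vmul v A y := \sum_x v x * A x y.

Definition sqnorm v := \sum_x `|v x| ^+ 2.

Definition is_eigenvalue A a :=
  exists2 v, (exists x, v x != 0) & forall y, vmul v A y = a * v y.

Definition rho_lt_sqrt3 A := forall a, is_eigenvalue A a -> `|a| < sqrtC 3.

Definition hermitian_gain A := forall x y, A y x = (A x y)^*.

Lemma sqnorm_ge0 v : 0 <= sqnorm v.
Proof. by apply: sumr_ge0 => x _; rewrite exprn_ge0. Qed.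

Lemma sqnorm_gt0 v : (exists x, v x != 0) -> 0 < sqnorm v.
Proof.
move=> [x vx]; rewrite /sqnorm (bigD1 x) //=.
by rewrite ltr_pwDl ?sqnorm_ge0 ?exprn_gt0 ?normr_gt0 //; apply: sumr_ge0 => y _; rewrite exprn_ge0.
Qed.

Lemma eigenvalue_gauge A B c a : (forall x, c x != 0) ->
  (forall x y, B x y * c x = A x y * c y) ->
  is_eigenvalue A a -> is_eigenvalue B a.
Proof.
move=> c0 cAB [v [x vx] ev]; exists (fun x => v x * c x).
  by exists x; rewrite mulf_neq0.
move=> y; rewrite mulrA -ev /vmul mulr_suml; apply: eq_bigr => z _.
have -> : B z y = A z y * c y / c z by rewrite -cAB mulfK.
by field; rewrite !c0.
Qed.

Lemma eigenvalue_conj A a :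
  is_eigenvalue A a -> is_eigenvalue (fun x y => (A x y)^*) a^*.
Proof.
move=> [v [x vx] ev]; exists (fun x => (v x)^*); first by exists x; rewrite conjC_eq0.
by move=> y; rewrite -rmorphM -ev /vmul rmorph_sum; apply: eq_bigr => z _; rewrite rmorphM.
Qed.

Lemma eigenvalue_real A a : hermitian_gain A -> is_eigenvalue A a -> a \is Num.real.
Proof.
move=> herm [v v0 ev].
pose Q := \sum_y vmul v A y * (v y)^*.
have QE : Q = a * sqnorm v.
  rewrite /Q /sqnorm mulr_sumr; apply: eq_bigr => y _.
  by rewrite ev normCK mulrA.
have Qr : Q^* = Q.
  rewrite /Q /vmul rmorph_sum /=.
  under eq_bigr => y _ do rewrite mulr_suml rmorph_sum /=.
  rewrite exchange_big /=; apply: eq_bigr => x _; rewrite mulr_suml.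
  by apply: eq_bigr => y _; rewrite !rmorphM /= conjCK -herm; ring.
have n0 : sqnorm v != 0 by rewrite gt_eqF ?sqnorm_gt0.
have nr : (sqnorm v)^* = sqnorm v by rewrite geC0_conj ?sqnorm_ge0.
by apply/CrealP; apply: (mulIf n0); rewrite -QE -Qr QE rmorphM /= nr.
Qed.

Lemma sqnorm_eigen A a v : (forall y, vmul v A y = a * v y) ->
  sqnorm (vmul v A) = `|a| ^+ 2 * sqnorm v.
Proof.
by move=> ev; rewrite /sqnorm mulr_sumr; apply: eq_bigr => y _; rewrite ev normrM exprMn.
Qed.

End Spectrum.

Lemma eigenvalue_relabel (S T : finType) (f : S -> T) (A : T -> T -> algC) a :
  bijective f -> is_eigenvalue (fun i j => A (f i) (f j)) a <-> is_eigenvalue A a.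
Proof.
move=> [g fK gK]; have reidx F : \sum_x F x = \sum_i F (f i) :> algC.
  by rewrite (reindex f) //; exists g => x _.
split=> [[v [i vi] ev]|[v [x vx] ev]].
- exists (fun x => v (g x)); first by exists (f i); rewrite fK.
  by move=> y; rewrite -[y]gK -ev /vmul reidx; apply: eq_bigr => j _; rewrite !fK.
- exists (fun i => v (f i)); first by exists (g x); rewrite gK.
  by move=> j; rewrite -ev /vmul [RHS]reidx.
Qed.

Lemma eigenvalue_mx n (M : 'M[algC]_n) a :
  eigenvalue M a <-> is_eigenvalue (fun i j => M i j) a.
Proof.
split=> [/eigenvalueP [x ev x0]|[v [i vi] ev]].
- exists (x 0).
    apply/existsP; apply: contraNT x0; rewrite negb_exists => /forallP x0.
    by apply/eqP/rowP => j; rewrite mxE; apply/eqP; rewrite -[_ == _]negbK.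
  by move=> j; have /rowP /(_ j) := ev; rewrite !mxE.
- apply/eigenvalueP; exists (\row_j v j).
    by apply/rowP => j; rewrite !mxE -ev; apply: eq_bigr => k _; rewrite mxE.
  by apply: contra vi => /eqP /rowP /(_ i); rewrite !mxE => ->.
Qed.

Section NormalMatrix.
Local Open Scope sesquilinear_scope.
Variable n : nat.
Implicit Types (x : 'rV[algC]_n) (M P : 'M[algC]_n).

Lemma sqnorm_row x : sqnorm (x 0) = (x *m x ^t*) 0 0.
Proof. by rewrite !mxE; apply: eq_bigr => i _; rewrite !mxE normCK. Qed.

Lemma sqnorm_unitary x P : P \is unitarymx -> sqnorm ((x *m P) 0) = sqnorm (x 0).
Proof.
move=> /unitarymxP PP; rewrite !sqnorm_row trmx_mul map_mxM mulmxA.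
by rewrite -[x *m P *m _]mulmxA PP mulmx1.
Qed.

Lemma normalmx_sqnorm_lt M (r : algC) : M \is normalmx ->
  (forall a, eigenvalue M a -> `|a| ^+ 2 < r) ->
  forall x, x != 0 -> sqnorm ((x *m M) 0) < r * sqnorm (x 0).
Proof.
move=> /orthomx_spectralP; set P := spectralmx M; set d := spectral_diag M.
have PU : P \is unitarymx by apply: spectral_unitarymx.
rewrite invmx_unitary // => ME eig_lt x x0.
have PP : P *m P ^t* = 1%:M by apply/unitarymxP.
have d_lt i : `|d 0 i| ^+ 2 < r.
  apply: eig_lt; apply/eigenvalueP; exists (row i P).
    by rewrite -row_mul {1}ME !mulmxA PP mul1mx mul_diag_mx; apply/rowP => j; rewrite !mxE.
  apply/eqP => /rowP Pi0; have /matrixP /(_ i i) := PP; rewrite !mxE eqxx /=.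
  rewrite big1 => [/eqP|j _]; first by rewrite eq_sym oner_eq0.
  by have := Pi0 j; rewrite !mxE => ->; rewrite mul0r.
set u := x *m P ^t*.
have xE : x = u *m P by rewrite /u mulmxKtV.
have [i ui] : exists i, u 0 i != 0.
  apply/existsP; apply: contraNT x0; rewrite negb_exists xE => /forallP u0.
  suff -> : u = 0 by rewrite mul0mx.
  by apply/rowP => j; rewrite [RHS]mxE; apply/eqP; move: (u0 j); rewrite negbK.
rewrite {1}ME xE !mulmxA mulmxtVK // !(sqnorm_unitary _ PU).
rewrite /sqnorm mulr_sumr (bigD1 i) //= [X in _ < X](bigD1 i) //=.
have termE j : `|(u *m diag_mx d) 0 j| ^+ 2 = `|u 0 j| ^+ 2 * `|d 0 j| ^+ 2.
  by rewrite mul_mx_diag mxE normrM exprMn.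
apply: ltr_leD; first by rewrite termE [r * _]mulrC ltr_pM2l ?exprn_gt0 ?normr_gt0.
by apply: ler_sum => j _; rewrite termE mulrC ler_wpM2r ?exprn_ge0 // ltW.
Qed.

End NormalMatrix.

Section Injection.
Variables (S T : finType) (f : S -> T).
Hypothesis f_inj : injective f.

Lemma sum_inj_le (F : T -> algC) : (forall x, 0 <= F x) ->
  \sum_i F (f i) <= \sum_x F x.
Proof.
move=> F0; rewrite [leRHS](bigID (mem (f @: S))) /= big_imset /=; last by move=> i j _ _ /f_inj.
by rewrite lerDl sumr_ge0.
Qed.

Lemma sum_inj (F : T -> algC) : (forall x, x \notin f @: S -> F x = 0) ->
  \sum_x F x = \sum_i F (f i).
Proof.
move=> F0; rewrite (bigID (mem (f @: S))) /= big_imset /=; last by move=> i j _ _ /f_inj.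
by rewrite [X in _ + X]big1 ?addr0.
Qed.

Definition extend (v : S -> algC) (x : T) : algC := oapp v 0 [pick i | f i == x].

Lemma extendE v i : extend v (f i) = v i.
Proof. by rewrite /extend; case: pickP => [j /eqP /f_inj -> //|/(_ i)]; rewrite eqxx. Qed.

Lemma extend_out v x : x \notin f @: S -> extend v x = 0.
Proof.
move=> xS; rewrite /extend; case: pickP => [i /eqP fi|//].
by move: xS; rewrite -fi imset_f.
Qed.

End Injection.

Lemma sum_enum_val (T : finType) (F : T -> algC) : \sum_(i < #|T|) F (enum_val i) = \sum_x F x.
Proof.
rewrite [RHS](reindex (@enum_val T predT)) //.
by exists enum_rank => x _; rewrite ?enum_valK ?enum_rankK.
Qed.

Section TestVector.
Variables (T : finType) (A : T -> T -> algC).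
Hypothesis A_herm : hermitian_gain A.

Lemma rho_sqnorm_lt w : rho_lt_sqrt3 A -> (exists x, w x != 0) ->
  sqnorm (vmul w A) < 3 * sqnorm w.
Proof.
move=> rA [x0 wx0].
pose M : 'M[algC]_#|T| := \matrix_(i, j) A (enum_val i) (enum_val j).
have M_normal : M \is normalmx.
  apply/normalmxP; suff -> : map_mx Num.conj M^T = M by [].
  by apply/matrixP => i j; rewrite !mxE A_herm conjCK.
pose x : 'rV_#|T| := \row_i w (enum_val i).
have <- : sqnorm (x 0) = sqnorm w.
  by rewrite /sqnorm -[RHS]sum_enum_val; apply: eq_bigr => i _; rewrite mxE.
have <- : sqnorm ((x *m M) 0) = sqnorm (vmul w A).
  rewrite /sqnorm -[RHS]sum_enum_val; apply: eq_bigr => j _; rewrite !mxE /vmul.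
  by congr (`|_| ^+ 2); rewrite -[RHS]sum_enum_val; apply: eq_bigr => i _; rewrite !mxE.
apply: normalmx_sqnorm_lt => // [a /eigenvalue_mx Ma|].
  have : is_eigenvalue (fun i j : 'I_#|T| => A (enum_val i) (enum_val j)) a.
    by case: Ma => v v0 ev; exists v => // j; rewrite -ev; apply: eq_bigr => i _; rewrite mxE.
  move/eigenvalue_relabel => /(_ (enum_val_bij T)) /rA.
  by rewrite -(@ltr_pXn2r _ 2) ?nnegrE ?sqrtC_ge0 ?ler0n // sqrtCK.
apply: contra wx0 => /eqP /rowP /(_ (enum_rank x0)).
by rewrite !mxE enum_rankK => ->.
Qed.

Lemma test_vector_not_rho w : (exists x, w x != 0) ->
  3 * sqnorm w <= sqnorm (vmul w A) -> ~ rho_lt_sqrt3 A.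
Proof. by move=> w0 le rA; have := lt_le_trans (rho_sqnorm_lt rA w0) le; rewrite ltxx. Qed.

Lemma rho_induced (S : finType) (f : S -> T) : injective f ->
  rho_lt_sqrt3 A -> rho_lt_sqrt3 (fun i j => A (f i) (f j)).
Proof.
move=> f_inj rA a [v [i vi] ev]; rewrite real_ltNge ?realE ?normr_ge0 ?sqrtC_ge0 ?ler0n //.
apply/negP => le_a; apply: (test_vector_not_rho (w := extend f v)) => //.
  by exists (f i); rewrite extendE.
have ext_norm : sqnorm (extend f v) = sqnorm v.
  rewrite /sqnorm (sum_inj f_inj) => [|x /extend_out ->]; last by rewrite normr0 expr0n.
  by apply: eq_bigr => j _; rewrite extendE.
have ext_eig : \sum_j `|vmul (extend f v) A (f j)| ^+ 2 = `|a| ^+ 2 * sqnorm v.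
  rewrite -(sqnorm_eigen ev); apply: eq_bigr => j _; congr (`|_| ^+ 2).
  rewrite /vmul (sum_inj f_inj) => [|x /extend_out ->]; last by rewrite mul0r.
  by apply: eq_bigr => k _; rewrite extendE.
have := sum_inj_le f_inj (F := fun y => `|vmul (extend f v) A y| ^+ 2).
rewrite ext_norm ext_eig => /(_ (fun y => exprn_ge0 _ (normr_ge0 _))); apply: le_trans.
rewrite ler_wpM2r ?sqnorm_ge0 //.
by rewrite -[3](@sqrtCK _ 3) lerXn2r ?nnegrE ?sqrtC_ge0 ?ler0n.
Qed.

End TestVector.

(** * Switching as a diagonal similarity *)

Definition entry_eqb (e f : entry) : bool :=
  match e, f with
  | E0, E0 | Eund, Eund | Efwd, Efwd | Ebwd, Ebwd => true
  | _, _ => false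
  end.

Lemma entry_eqP : Equality.axiom entry_eqb.
Proof. by case; case; constructor. Qed.

HB.instance Definition _ := hasDecEq.Build entry entry_eqP.

Lemma entryC_T6 e : e != E0 -> entryC e \in T6.
Proof. by case: e => //= _; rewrite !inE eqxx ?orbT. Qed.

Lemma entryC_eq0 e : (entryC e == 0) = (e == E0).
Proof. by case: e => /=; rewrite ?eqxx //; apply/negbTE/T6_neq0; rewrite !inE eqxx ?orbT. Qed.

Lemma entryC_inj : injective entryC.
Proof.
pose k e := match e with Efwd => 1 | Ebwd => 5 | _ => 0 end%N.
have entryE e : e != E0 -> entryC e = omega ^+ k e.
  by case: e => //= _; rewrite ?expr1 ?omega_conjE.
move=> e f; have [->|e0] := eqVneq e E0; have [->|f0] := eqVneq f E0 => // /eqP.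
- by rewrite eq_sym entryC_eq0 (negbTE f0).
- by rewrite entryC_eq0 (negbTE e0).
rewrite (entryE e e0) (entryE f f0) (eq_prim_root_expr omega_prim).
by case: e f e0 f0 => [] [].
Qed.

Lemma entryC_flip e : entryC (flip_entry e) = (entryC e)^*.
Proof. by case: e => /=; rewrite ?rmorph0 ?rmorph1 ?conjCK. Qed.

Definition gain (T : finType) (h : mgraph T) : T -> T -> algC :=
  fun x y => entryC (h x y).

Lemma gain_herm (T : finType) (h : mgraph T) : mixed_wf h -> hermitian_gain (gain h).
Proof. by move=> [_ hsym] x y; rewrite /gain hsym entryC_flip. Qed.

Lemma eigenvalue_Nmat n (g : mgraph 'I_n) a :
  eigenvalue (Nmat g) a <-> is_eigenvalue (gain g) a.
Proof.
rewrite eigenvalue_mx; suff -> : (fun i j => Nmat g i j) = gain g by [].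
by do 2 apply: functional_extensionality => ?; rewrite mxE.
Qed.

Section Similarity.
Variable T : finType.
Implicit Types (A B C : T -> T -> algC).

(* [B = D^-1 A D] for a diagonal [D] with entries in [T6]. *)
Definition T6_similar A B :=
  exists2 c : T -> algC, (forall x, c x \in T6) & forall x y, B x y * c x = A x y * c y.

Lemma T6_similar_sym A B : T6_similar A B -> T6_similar B A.
Proof.
move=> [c cT cAB]; exists (fun x => (c x)^-1) => [x|x y]; first exact: T6V.
apply: (mulIf (T6_neq0 (cT x))); apply: (mulIf (T6_neq0 (cT y))).
by rewrite mulfVK ?T6_neq0 // [RHS]mulrAC mulfVK ?T6_neq0 // cAB.
Qed.

Lemma T6_similar_trans A B C : T6_similar A B -> T6_similar B C -> T6_similar A C.
Proof.
move=> [c cT cAB] [d dT dBC]; exists (fun x => c x * d x) => [x|x y]; first exact: T6M.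
by rewrite mulrA mulrAC dBC mulrAC cAB -mulrA.
Qed.

Lemma rho_T6_similar A B : T6_similar A B -> rho_lt_sqrt3 A <-> rho_lt_sqrt3 B.
Proof.
have gauge A' B' : T6_similar A' B' -> forall a, is_eigenvalue A' a -> is_eigenvalue B' a.
  by move=> [c cT cAB] a; apply: (eigenvalue_gauge (c := c)) => // x; apply: T6_neq0.
by move=> AB; split=> rho a /gauge ev; apply/rho/ev; [apply: T6_similar_sym|].
Qed.

End Similarity.

Section Switching.
Variable T : finType.
Implicit Types (g h t : mgraph T) (c : T -> algC).

Lemma three_way_gain c h : admissible c h ->
  forall x y, gain (three_way c h) x y * c x = gain h x y * c y.
Proof.
move=> [_ adm] x y; have := adm x y; rewrite /gain /three_way.
case: (h x y) => /=; first by rewrite !mul0r.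
- case: (c y =P omega * c x) => [->|_]; first by rewrite mul1r.
  case: (c x =P omega * c y) => [->|_]; first by rewrite mulrA omega_conjM !mul1r.
  by rewrite /= !orbF !mul1r => /eqP ->.
- case: (c y =P omega^* * c x) => [->|_].
    by rewrite mulrA [omega * _]mulrC omega_conjM !mul1r.
  case: (c y =P - omega * c x) => [->|_].
    by rewrite /= mulrA mulrN -expr2 omega_sqr omega_conj => _; ring.
  by rewrite /= !orbF => /eqP ->.
- case: (c x =P omega^* * c y) => [->|_]; first by rewrite mul1r.
  case: (c x =P - omega * c y) => [->|_].
    by rewrite /= mulrA mulrN -expr2 omega_sqr omega_conj => _; ring.
  by rewrite /= !orbF => /eqP ->.
Qed.

Lemma three_way_similar c h : admissible c h -> T6_similar (gain h) (gain (three_way c h)).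
Proof. by move=> adm; exists c; [case: adm | apply: three_way_gain]. Qed.

Lemma reverse_arcsK : involutive (@reverse_arcs T).
Proof.
move=> h; do 2 apply: functional_extensionality => ?.
by rewrite /reverse_arcs; case: (h _ _).
Qed.

Lemma rho_reverse_arcs h : rho_lt_sqrt3 (gain h) -> rho_lt_sqrt3 (gain (reverse_arcs h)).
Proof.
move=> rh a /eigenvalue_conj ev; rewrite -norm_conjC; apply: rh.
case: ev => v v0 vE; exists v => // y; rewrite -vE.
by apply: eq_bigr => x _; rewrite /gain entryC_flip conjCK.
Qed.

Lemma rho_sw_reach g g' : sw_reach g g' -> rho_lt_sqrt3 (gain g) <-> rho_lt_sqrt3 (gain g').
Proof.
elim=> [|g1 c _ IH adm|g1 _ IH]; first by [].
- by rewrite IH; apply: rho_T6_similar; apply: three_way_similar.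
- rewrite IH; split=> [|/rho_reverse_arcs]; first exact: rho_reverse_arcs.
  by rewrite reverse_arcsK.
Qed.

Lemma T6_similar_admissible c h t : (forall x, c x \in T6) ->
  (forall x y, gain t x y * c x = gain h x y * c y) -> admissible c h.
Proof.
move=> cT rel; split=> // x y; have := rel x y; rewrite /gain.
have cx0 := T6_neq0 (cT x); have cy0 := T6_neq0 (cT y).
have om1 := omega_conjM; have om2 := omega_conj_sqr.
have omK d : d = omega^* * (omega * d) by rewrite mulrA om1 mul1r.
case: (h x y) => //=; case: (t x y) => /= E.
all: try by move/esym/eqP: E; rewrite mul0r mulf_eq0 (negbTE cy0) orbF
              ?oner_eq0 ?conjC_eq0 ?(negbTE omega_neq0).
- by rewrite !mul1r in E; rewrite E eqxx.
- by rewrite mul1r in E; rewrite -E eqxx orbT.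
- by rewrite mul1r in E; rewrite -E mulrA [omega * _^*]mulrC om1 mul1r eqxx !orbT.
- by rewrite mul1r in E; rewrite E mulrA om1 mul1r eqxx orbT.
- by rewrite (mulfI omega_neq0 E) eqxx.
- by rewrite [c y]omK -E mulrA -expr2 om2 eqxx !orbT.
- by rewrite mul1r in E; rewrite E eqxx orbT.
- by rewrite [c x]omK E mulrA -expr2 om2 eqxx !orbT.
- by rewrite (mulfI _ E) ?eqxx // conjC_eq0 omega_neq0.
Qed.

Lemma T6_similar_sw_reach h t : T6_similar (gain h) (gain t) -> sw_reach h t.
Proof.
move=> [c cT rel]; have adm := T6_similar_admissible cT rel.
suff <- : three_way c h = t by apply: sw_three => //; apply: sw_refl.
apply: functional_extensionality => x; apply: functional_extensionality => y.
by apply: entryC_inj; apply: (mulIf (T6_neq0 (cT x))); rewrite [LHS]three_way_gain // -rel.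
Qed.

End Switching.

Lemma rho_mg_iso (T1 T2 : finType) (g1 : mgraph T1) (g2 : mgraph T2) :
  mg_iso g1 g2 -> rho_lt_sqrt3 (gain g1) <-> rho_lt_sqrt3 (gain g2).
Proof.
move=> [f [fbij fE]].
have ev a : is_eigenvalue (gain g1) a <-> is_eigenvalue (gain g2) a.
  rewrite -(eigenvalue_relabel _ _ fbij); suff -> : gain g1 = fun x y => gain g2 (f x) (f y) by [].
  by do 2 apply: functional_extensionality => ?; rewrite /gain fE.
by split=> rho a /ev; apply: rho.
Qed.

Lemma rho_sw_equiv (T1 T2 : finType) (g1 : mgraph T1) (g2 : mgraph T2) :
  sw_equiv g1 g2 -> rho_lt_sqrt3 (gain g1) <-> rho_lt_sqrt3 (gain g2).
Proof.
case=> [[g' [R I]]|[g' [R I]]].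
- by rewrite (rho_sw_reach R); apply: rho_mg_iso.
- by rewrite -(rho_mg_iso I) (rho_sw_reach R).
Qed.

(** * Gain graphs on paths and cycles *)

Definition ring_gain (k : nat) (psi : algC) (i j : 'I_k) : algC :=
  if (i.+1 == j :> nat) || (j.+1 == i :> nat) then 1
  else if [&& 2 < k, i == k.-1 :> nat & j == 0 :> nat]%N then psi
  else if [&& 2 < k, i == 0 :> nat & j == k.-1 :> nat]%N then psi^*
  else 0.
Arguments ring_gain : clear implicits.

Lemma ring_gain_herm k psi : hermitian_gain (ring_gain k psi).
Proof.
move=> i j; rewrite /ring_gain orbC; case: ifP => _; first by rewrite rmorph1.
case: (ltnP 2 k) => /= [k2|_]; last by rewrite rmorph0.
case: i j => [i _] [j _] /=.
case: (j =P k.-1) => ?; case: (i =P 0%N) => ?; case: (j =P 0%N) => ?; case: (i =P k.-1) => ?;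
  by rewrite /= ?conjCK ?rmorph0 //; lia.
Qed.

Lemma gain_Pk k : gain (Pk k) = ring_gain k 0.
Proof.
do 2 apply: functional_extensionality => ?; rewrite /gain /Pk /ring_gain.
by case: ifP => //= _; rewrite rmorph0 !if_same.
Qed.

Lemma ring_gain_short k psi : (k <= 2)%N -> ring_gain k psi = ring_gain k 0.
Proof.
move=> k2; do 2 apply: functional_extensionality => ?; rewrite /ring_gain.
by rewrite ltnNge k2.
Qed.

(* On [P_5] the vector (1,0,2,0,1) has Rayleigh quotient exactly 3; closing
   the cycle only adds [2 |psi|^2]. *)
Lemma not_rho_ring5 psi : ~ rho_lt_sqrt3 (ring_gain 5 psi).
Proof.
pose w (i : 'I_5) : algC := nth 0 [:: 1; 0; 2; 0; 1] i.
apply: (test_vector_not_rho (@ring_gain_herm 5 psi) (w := w)).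
  by exists ord0; rewrite /= oner_eq0.
rewrite /sqnorm /vmul /ring_gain /w !big_ord_recr !big_ord0 /= !(mulr0, mulr1, mul1r, add0r, addr0).
rewrite !normCK !(rmorphD, rmorph1, rmorph0, rmorph_nat) conjCK -subr_ge0.
rewrite [X in 0 <= X](_ : _ = 2 * (psi * psi^*)); last by ring.
by rewrite -normCK mulr_ge0 ?exprn_ge0.
Qed.

Lemma not_rho_ring4 psi : psi \in T6 -> psi != -1 -> ~ rho_lt_sqrt3 (ring_gain 4 psi).
Proof.
move=> pT pN1; pose w (i : 'I_4) : algC := nth 0 [:: 1; 0; 1 + psi^*; 0] i.
(* the excess [|wN|^2 - 3 |w|^2] of this vector is [1 + psi + psi^-1] *)
apply: (test_vector_not_rho (@ring_gain_herm 4 psi) (w := w)).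
  by exists ord0; rewrite /= oner_eq0.
rewrite /sqnorm /vmul /ring_gain /w !big_ord_recr !big_ord0 /= !(mulr0, mulr1, mul1r, add0r, addr0).
rewrite !normCK !(rmorphD, rmorphM, rmorph1, rmorph0, rmorph_nat) /= ?conjCK T6_conjV // -subr_ge0.
rewrite [X in 0 <= X](_ : _ = psi + psi^-1 + 1); last by field; rewrite T6_neq0.
case: (T6_trace pT) => [p1|->|t_ge]; first by rewrite p1 eqxx in pN1.
  by rewrite addNr.
by rewrite addr_ge0 // (le_trans ler01 t_ge).
Qed.

Lemma T6_trace_le c : c \in T6 -> c + c^-1 <= -1 \/ 1 <= c + c^-1.
Proof.
case/T6_trace=> [->|->|]; [left|left|by right]; rewrite // invrN invr1.
by rewrite -opprD lerN2 lerDl ler01.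
Qed.

Lemma not_rho_ring3 psi : psi \in T6 -> ~ rho_lt_sqrt3 (ring_gain 3 psi).
Proof.
move=> pT.
have test s : s ^+ 2 = 1 -> s^* = s -> 1 <= s * (psi + psi^-1) ->
    ~ rho_lt_sqrt3 (ring_gain 3 psi).
  move=> s2 sr st; pose w (i : 'I_3) : algC := nth 0 [:: 1; s; 1] i.
  apply: (test_vector_not_rho (@ring_gain_herm 3 psi) (w := w)).
    by exists ord0; rewrite /= oner_eq0.
  rewrite /sqnorm /vmul /ring_gain /w !big_ord_recr !big_ord0 /= !(mulr0, mulr1, mul1r, add0r, addr0).
  rewrite !normCK !(rmorphD, rmorphM, rmorph1, rmorph0, rmorph_nat) /= ?conjCK sr.
  rewrite T6_conjV // -subr_ge0.
  rewrite [X in 0 <= X](_ : _ = 2 * (s * (psi + psi^-1)) - s ^+ 2); last by field; rewrite T6_neq0.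
  have t0 := le_trans ler01 st.
  by rewrite s2 subr_ge0 mulr_natl mulr2n; apply: le_trans st _; rewrite lerDr.
case: (T6_trace_le pT) => [t_le|t_ge].
- by apply: (test (-1)); rewrite ?sqrrN ?expr1n ?rmorphN ?rmorph1 // mulN1r lerNr.
- by apply: (test 1); rewrite ?expr1n ?rmorph1 ?mul1r.
Qed.

Lemma norm_lt_sqrt3 (a : algC) : `|a| ^+ 2 < 3 -> `|a| < sqrtC 3.
Proof. by move=> a3; rewrite -(@ltr_pXn2r _ 2) ?nnegrE ?sqrtC_ge0 ?ler0n // sqrtCK. Qed.

Lemma ring4_eigen psi a : is_eigenvalue (ring_gain 4 psi) a ->
  exists2 w : nat -> algC, (exists2 n, (n < 4)%N & w n != 0) &
  [/\ w 1%N + w 3%N * psi = a * w 0%N, w 0%N + w 2%N = a * w 1%N,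
      w 1%N + w 3%N = a * w 2%N & w 0%N * psi^* + w 2%N = a * w 3%N].
Proof.
case=> v [i vi] ev; exists (fun n => v (inord n)).
  by exists i; rewrite ?inord_val.
have eq (j : 'I_4) : \sum_(i < 4) v (inord i) * ring_gain 4 psi i j = a * v (inord j).
  by rewrite !inord_val -ev; apply: eq_bigr => k _; rewrite inord_val.
have := eq (@Ordinal 4 0 isT); have := eq (@Ordinal 4 1 isT).
have := eq (@Ordinal 4 2 isT); have := eq (@Ordinal 4 3 isT).
rewrite /ring_gain !big_ord_recr !big_ord0 /= !(mulr0, mulr1, add0r, addr0).
by move=> e3 e2 e1 e0; split.
Qed.

Lemma rho_path4 : rho_lt_sqrt3 (ring_gain 4 0).
Proof.
move=> a ev; have a_real := eigenvalue_real (@ring_gain_herm 4 0) ev.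
have [w [n n4 wn] [e0 e1 e2 e3]] := ring4_eigen ev.
rewrite mulr0 addr0 in e0; rewrite rmorph0 mulr0 add0r in e3.
pose p := a ^+ 4 - 3 * a ^+ 2 + 1. (* the characteristic polynomial of P_4 *)
have w2 : w 2%N = (a ^+ 2 - 1) * w 0%N by rewrite -[w 2%N](addKr (w 0%N)) e1 e0; ring.
have w3 : w 3%N = (a ^+ 3 - 2 * a) * w 0%N by rewrite -[w 3%N](addKr (w 1%N)) e2 w2 e0; ring.
have pw0 : p * w 0%N = 0.
  have -> : p * w 0%N = a * w 3%N - w 2%N by rewrite w3 w2 /p; ring.
  by rewrite e3 subrr.
have p0 : p = 0.
  apply/eqP; apply: contraNT wn => p0.
  have w0 : w 0%N = 0 by apply/eqP; move/eqP: pw0; rewrite mulf_eq0 (negbTE p0).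
  by case: n n4 => [|[|[|[|//]]]] _; rewrite ?e0 ?w2 ?w3 w0 ?mulr0.
apply: norm_lt_sqrt3; rewrite -normrX ger0_norm -?realEsqr //.
rewrite real_ltNge ?realn ?rpredX //; apply/negP => b3.
have : 0 < a ^+ 2 * (a ^+ 2 - 3) + 1.
  by rewrite ltr_wpDl // mulr_ge0 ?subr_ge0 // (le_trans _ b3).
have -> : a ^+ 2 * (a ^+ 2 - 3) + 1 = p by rewrite /p; ring.
by rewrite p0 ltxx.
Qed.

Lemma rho_ring4_N1 : rho_lt_sqrt3 (ring_gain 4 (-1)).
Proof.
move=> a /ring4_eigen [w [n n4 wn] [e0 e1 e2 e3]].
rewrite mulrN1 in e0; rewrite rmorphN1 mulrN1 in e3.
have sq : a * (a * w n) = 2 * w n.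
  case: n n4 {wn} => [|[|[|[|//]]]] _.
  - by rewrite -e0 mulrBr -e1 -e3; ring.
  - by rewrite -e1 mulrDr -e0 -e2; ring.
  - by rewrite -e2 mulrDr -e1 -e3; ring.
  - by rewrite -e3 mulrDr mulrN -e0 -e2; ring.
have a2 : a ^+ 2 = 2 by apply: (mulIf wn); rewrite -sq expr2 mulrA.
by apply: norm_lt_sqrt3; rewrite -normrX a2 normr_nat ltr_nat.
Qed.

Lemma rho_path k : (k <= 4)%N -> rho_lt_sqrt3 (ring_gain k 0).
Proof.
move=> k4; pose f (i : 'I_k) : 'I_4 := widen_ord k4 i.
have -> : ring_gain k 0 = fun i j => ring_gain 4 0 (f i) (f j).
  do 2 apply: functional_extensionality => ?; rewrite /ring_gain /=.
  by rewrite rmorph0 !if_same.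
apply: (rho_induced (@ring_gain_herm 4 0)) rho_path4.
by move=> i j fij; apply: val_inj; exact: (congr1 (@nat_of_ord 4) fij).
Qed.

Section InducedRing.
Variables (T : finType) (A : T -> T -> algC) (x0 : T) (s : seq T).
Local Notation k := (size s).
Local Notation x i := (nth x0 s i).
Hypothesis A_herm : hermitian_gain A.
Hypothesis A_diag : forall y, A y y = 0.
Hypothesis path_T6 : forall i, (i.+1 < k)%N -> A (x i) (x i.+1) \in T6.
Hypothesis no_chord : forall i j, (i.+1 < j < k)%N -> ~~ ((i == 0) && (j == k.-1))%N ->
  A (x i) (x j) = 0.

Definition cycle_gain := A (x k.-1) (x 0) * \prod_(i < k.-1) A (x i) (x i.+1).

Lemma induced_ring_similar :
  T6_similar (fun i j : 'I_k => A (x i) (x j)) (ring_gain k cycle_gain).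
Proof.
pose P n := \prod_(i < n) A (x i) (x i.+1).
have PT n : (n < k)%N -> P n \in T6.
  elim: n => [|n IHn] nk; first by rewrite /P big_ord0 !inE eqxx.
  by rewrite /P big_ord_recr T6M ?IHn ?path_T6 // ltnW.
have P0 : P 0%N = 1 by rewrite /P big_ord0.
have PS n : P n.+1 = P n * A (x n) (x n.+1) by rewrite /P big_ord_recr.
have unit c : c \in T6 -> c * c^* = 1 by move=> cT; rewrite T6_conjV ?mulfV ?T6_neq0.
(* the gauge undoes the gains along the path *)
exists (fun i : 'I_k => (P i)^*) => [i|i j]; first by rewrite T6_conjV ?T6V ?PT.
rewrite /ring_gain; case: ifP => [/orP[/eqP ij|/eqP ji]|nadj].
- by rewrite -ij PS rmorphM mulrCA unit ?mulr1 ?mul1r ?path_T6 // ij.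
- by rewrite -ji PS rmorphM /= mul1r -A_herm mulrC.
case: ifP => [/and3P[_ /eqP-> /eqP->]|nk0].
  rewrite /cycle_gain -mulrA unit ?PT ?P0 ?rmorph1 //; have := ltn_ord i; lia.
case: ifP => [/and3P[_ /eqP-> /eqP->]|n0k].
  by rewrite /cycle_gain P0 rmorph1 mulr1 rmorphM /= -A_herm.
rewrite mul0r; apply/esym/eqP; rewrite mulf_eq0; apply/orP; left; apply/eqP.
have [ij|ji|/val_inj->] := ltngtP i j; last exact: A_diag.
- by apply: no_chord; have := ltn_ord j; lia.
- by rewrite A_herm no_chord ?rmorph0 //; have := ltn_ord i; lia.
Qed.

End InducedRing.

(** * Graphs of maximum degree two *)

Section DegreeTwo.
Variables (T : finType) (e : rel T).
Hypothesis e_sym : symmetric e.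

Definition max_degree_le2 := forall x, (#|[set y | e x y]| <= 2)%N.

Hypothesis deg2 : max_degree_le2.

Lemma no_three_neighbours x a b c : e x a -> e x b -> e x c -> ~ uniq [:: a; b; c].
Proof.
move=> xa xb xc /card_uniqP abc; have := deg2 x; rewrite leqNgt; apply/negP/negPn.
rewrite -[3%N]/(size [:: a; b; c]) -abc; apply: subset_leq_card.
by apply/subsetP => y; rewrite !inE => /or3P[] /eqP->.
Qed.

Lemma nth_uniq3 (x0 : T) (s : seq T) i j l : uniq s ->
  (i < size s)%N -> (j < size s)%N -> (l < size s)%N -> [&& i != j, i != l & j != l]%N ->
  uniq [:: nth x0 s i; nth x0 s j; nth x0 s l].
Proof.
move=> us iS jS lS /and3P[ij il jl].
by rewrite /= !inE !nth_uniq // negb_or ij il jl.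
Qed.

Lemma path_next (x : T) (q : seq T) n : path e x q -> (n < size q)%N ->
  e (nth x (x :: q) n) (nth x (x :: q) n.+1).
Proof. by move=> /(pathP x) adj; apply: adj. Qed.

Lemma path_prev (x : T) (q : seq T) n : path e x q -> (0 < n <= size q)%N ->
  e (nth x (x :: q) n) (nth x (x :: q) n.-1).
Proof. by case: n => [//|n] pq /andP[_ n_lt]; rewrite e_sym; apply: path_next. Qed.

Lemma path_chord_free (x : T) (q : seq T) : uniq (x :: q) -> path e x q ->
  forall i j, (i.+1 < j <= size q)%N -> ~~ ((i == 0) && (j == size q))%N ->
  ~~ e (nth x (x :: q) i) (nth x (x :: q) j).
Proof.
move=> us pq i j ij nend; apply/negP => eij; pose y n := nth x (x :: q) n.
have [i0|i_pos] := posnP i.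
- apply: (@no_three_neighbours (y j) (y j.-1) (y j.+1) (y i)).
  + by apply: path_prev; lia.
  + by apply: path_next; lia.
  + by rewrite e_sym.
  + by apply: nth_uniq3 => //=; lia.
- apply: (@no_three_neighbours (y i) (y i.-1) (y i.+1) (y j)) => //.
  + by apply: path_prev; lia.
  + by apply: path_next; lia.
  + by apply: nth_uniq3 => //=; lia.
Qed.

Lemma maximal_path_closed (x : T) (q : seq T) : uniq (x :: q) -> path e x q ->
  (forall z, z \notin x :: q -> ~~ e x z) ->
  (forall z, z \notin x :: q -> ~~ e (last x q) z) ->
  forall y z, y \in x :: q -> e y z -> z \in x :: q.
Proof.
move=> us pq first_max last_max y z ys yz; apply: contraT => zs.
have [i i_le yi] : exists2 i, (i <= size q)%N & y = nth x (x :: q) i.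
  by exists (index y (x :: q)); rewrite ?nth_index // -ltnS index_mem.
have [i0|i_pos] := posnP i.
  by move: (first_max z zs); rewrite (_ : x = y) ?yz // yi i0.
have [iq|iq] := eqVneq i (size q).
  by move: (last_max z zs); rewrite (_ : last x q = y) ?yz // yi (last_nth x) iq.
exfalso; apply: (@no_three_neighbours y (nth x (x :: q) i.-1) (nth x (x :: q) i.+1) z) => //.
- by rewrite yi path_prev //; lia.
- by rewrite yi path_next //; lia.
have nz n : (n <= size q)%N -> (nth x (x :: q) n == z) = false.
  by move=> n_le; apply: contraNF zs => /eqP <-; rewrite mem_nth.
rewrite !cons_uniq !inE !negb_or !nz ?nth_uniq //=; lia.
Qed.

Lemma hamiltonian_path (x0 : T) : (forall x y, connect e x y) ->
  exists x q, [/\ uniq (x :: q), path e x q & forall z, z \in x :: q].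
Proof.
move=> conn.
pose ok (s : seq T) := uniq s && (if s is x :: q then path e x q else false).
pose P n := [exists t : n.-tuple T, ok t].
have P1 : exists n, P n by exists 1%N; apply/existsP; exists [tuple x0].
have P_le n : P n -> (n <= #|T|)%N.
  by case/existsP=> t /andP[ut _]; rewrite -(size_tuple t) -(card_uniqP ut) max_card.
have [k /existsP[t ok_t] k_max] := ex_maxnP P1 P_le.
have ok_le s : ok s -> (size s <= k)%N.
  by move=> ok_s; apply: k_max; apply/existsP; exists (in_tuple s).
move: ok_t; rewrite /ok; case: (tval t) (size_tuple t) => [//|x q] size_k /andP[us pq].
have first_max z : z \notin x :: q -> ~~ e x z.
  move=> zs; apply/negP => xz; suff : (size [:: z, x & q] <= k)%N.
    by rewrite /= -size_k ltnn.
  by apply: ok_le; rewrite /ok /= zs -cons_uniq us e_sym xz.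
have last_max z : z \notin x :: q -> ~~ e (last x q) z.
  move=> zs; apply/negP => lz; suff : (size (x :: rcons q z) <= k)%N.
    by rewrite /= size_rcons -size_k ltnn.
  by apply: ok_le; rewrite /ok -rcons_cons rcons_uniq zs us /= rcons_path pq lz.
have s_closed := maximal_path_closed us pq first_max last_max.
exists x, q; split=> // z.
have /closed_connect := intro_closed (sym_connect_sym e_sym) (fun y z yz ys => s_closed y z ys yz).
by move/(_ x z (conn x z)) <-; rewrite mem_head.
Qed.

End DegreeTwo.

(** * Connected mixed graphs *)

Lemma T6_similar_refl (T : finType) (A : T -> T -> algC) : T6_similar A A.
Proof. by exists (fun=> 1) => [x|x y]; rewrite ?inE ?eqxx. Qed.

Lemma C4eq_similar : T6_similar (gain C4eq) (ring_gain 4 (-1)).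
Proof.
exists (fun i : 'I_4 => omega ^+ (5 * i)) => [i|]; first exact: T6_exp.
move=> [[|[|[|[|//]]]] ?] [[|[|[|[|//]]]] ?]; rewrite /ring_gain /gain /= ?mul0r //.
all: rewrite ?rmorphN1 -?omega_cube ?omega_conjE ?mul1r -?exprS -?exprD.
all: by apply/eqP; rewrite (eq_prim_root_expr omega_prim).
Qed.

Lemma nth_bij (T : finType) (x0 : T) (s : seq T) : uniq s -> (forall z, z \in s) ->
  bijective (fun i : 'I_(size s) => nth x0 s i).
Proof.
move=> us s_all; have lt z : (index z s < size s)%N by rewrite index_mem.
exists (fun z => Ordinal (lt z)) => [i|z]; last by rewrite nth_index.
by apply: val_inj; rewrite /= index_uniq.
Qed.

Section MixedGraph.
Variables (T : finType) (h : mgraph T).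
Hypothesis wf : mixed_wf h.

Lemma madj_sym : symmetric (madj h).
Proof. by case: wf => _ hsym x y; rewrite /madj [h y x]hsym; case: (h x y). Qed.

Lemma gain_diag x : gain h x x = 0.
Proof. by case: wf => hdiag _; rewrite /gain hdiag. Qed.

Lemma gain_adj x y : madj h x y -> gain h x y \in T6.
Proof. by rewrite /madj /gain; case: (h x y) => // _; apply: entryC_T6. Qed.

Lemma gain_nadj x y : ~~ madj h x y -> gain h x y = 0.
Proof. by rewrite /madj /gain; case: (h x y). Qed.

Lemma rho_max_degree_le2 : rho_lt_sqrt3 (gain h) -> max_degree_le2 (madj h).
Proof.
move=> rho x; rewrite leqNgt; apply/negP => deg3; pose w z : algC := (z == x)%:R.
apply: (test_vector_not_rho (gain_herm wf) (w := w)) rho; first by exists x; rewrite /w eqxx oner_eq0.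
have -> : sqnorm w = 1.
  rewrite /sqnorm (bigD1 x) //= big1 => [|z /negbTE zx]; last by rewrite /w zx normr0 expr0n.
  by rewrite /w eqxx normr1 expr1n addr0.
have -> : sqnorm (vmul w (gain h)) = #|[set y | madj h x y]|%:R.
  rewrite /sqnorm -sum1_card natr_sum [RHS]big_mkcond /=; apply: eq_bigr => y _.
  rewrite /vmul (bigD1 x) //= big1 => [|z /negbTE zx]; last by rewrite /w zx mul0r.
  rewrite /w eqxx mul1r addr0 inE; case: ifP => [/gain_adj/T6_norm ->|/negbT/gain_nadj ->].
    by rewrite expr1n.
  by rewrite normr0 expr0n.
by rewrite mulr1 ler_nat.
Qed.

Hypothesis deg2 : max_degree_le2 (madj h).

Lemma path_ring_similar (x : T) (q : seq T) : uniq (x :: q) -> path (madj h) x q ->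
  T6_similar (fun i j : 'I_(size (x :: q)) => gain h (nth x (x :: q) i) (nth x (x :: q) j))
             (ring_gain (size (x :: q)) (cycle_gain (gain h) x (x :: q))).
Proof.
move=> us pq; apply: induced_ring_similar => [||i iq|i j ij nend].
- exact: gain_herm.
- exact: gain_diag.
- by apply: gain_adj; apply: path_next.
- by apply: gain_nadj; apply: path_chord_free madj_sym deg2 _ _ us pq _ _ _ _.
Qed.

Lemma cycle_gain_cases (x : T) (q : seq T) : path (madj h) x q ->
  let psi := cycle_gain (gain h) x (x :: q) in psi = 0 \/ psi \in T6.
Proof.
move=> pq /=; rewrite /cycle_gain /=.
have [adj|nadj] := boolP (madj h (nth x (x :: q) (size q)) x).
  right; rewrite T6M ?gain_adj //; apply: (big_ind (fun c => c \in T6)) => [|c d|i _].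
  - by rewrite !inE eqxx.
  - exact: T6M.
  - by rewrite gain_adj // path_next.
by left; rewrite gain_nadj ?mul0r.
Qed.

Lemma rho_path_ring (x : T) (q : seq T) : uniq (x :: q) -> path (madj h) x q ->
  rho_lt_sqrt3 (gain h) ->
  rho_lt_sqrt3 (ring_gain (size (x :: q)) (cycle_gain (gain h) x (x :: q))).
Proof.
move=> us pq rho; rewrite -(rho_T6_similar (path_ring_similar us pq)).
apply: (rho_induced (gain_herm wf)) rho => i j /eqP.
by rewrite nth_uniq // => /eqP /val_inj.
Qed.

End MixedGraph.

Lemma sw_equiv_of_similar (T : finType) (h : mgraph T) k (f : 'I_k -> T) (X : mgraph 'I_k)
    (B : 'I_k -> 'I_k -> algC) : bijective f ->
  T6_similar (fun i j => gain h (f i) (f j)) B -> T6_similar (gain X) B -> sw_equiv h X.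
Proof.
move=> fbij hB XB; right; exists (fun i j => h (f i) (f j)); split; last by exists f.
exact/T6_similar_sw_reach/(T6_similar_trans XB)/T6_similar_sym.
Qed.

Lemma Pk_similar k : T6_similar (gain (Pk k)) (ring_gain k 0).
Proof. by rewrite gain_Pk; apply: T6_similar_refl. Qed.

Section Classification.
Variables (T : finType) (h : mgraph T) (x0 : T).
Hypotheses (wf : mixed_wf h) (conn : forall x y, connect (madj h) x y).
Hypothesis rho : rho_lt_sqrt3 (gain h).

Lemma connected_classification :
  sw_equiv h (Pk 1) \/ sw_equiv h (Pk 2) \/ sw_equiv h (Pk 3) \/ sw_equiv h (Pk 4) \/
  sw_equiv h C4eq.
Proof.
have deg2 := rho_max_degree_le2 wf rho.
have [x [q [us pq s_all]]] := hamiltonian_path (madj_sym wf) deg2 x0 conn.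
have to_sw (X : mgraph 'I_(size (x :: q))) :
    T6_similar (gain X) (ring_gain _ (cycle_gain (gain h) x (x :: q))) -> sw_equiv h X.
  exact: sw_equiv_of_similar (nth_bij x us s_all) (path_ring_similar wf deg2 us pq).
move: (rho_path_ring wf deg2 us pq rho) (cycle_gain_cases pq) to_sw; clear s_all.
case: q us pq => [|x2 [|x3 [|x4 [|x5 q]]]] us pq rho_ring psiP to_sw.
- by left; apply: to_sw; rewrite ring_gain_short //; apply: Pk_similar.
- by right; left; apply: to_sw; rewrite ring_gain_short //; apply: Pk_similar.
- case: psiP => [p0|pT]; last by case: (not_rho_ring3 pT).
  by right; right; left; apply: to_sw; rewrite p0; apply: Pk_similar.
- case: psiP => [p0|pT].
    by right; right; right; left; apply: to_sw; rewrite p0; apply: Pk_similar.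
  have [pN1|pN1] := eqVneq (cycle_gain (gain h) x [:: x, x2, x3 & [:: x4]]) (-1).
    by right; right; right; right; apply: to_sw; rewrite pN1; apply: C4eq_similar.
  by case: (not_rho_ring4 pT pN1).
- have u5 : uniq [:: x; x2; x3; x4; x5] by apply: subseq_uniq us; apply: prefix_subseq.
  have p5 : path (madj h) x [:: x2; x3; x4; x5].
    by move: pq; rewrite -[[:: x2, x3, x4, x5 & q]]/([:: x2; x3; x4; x5] ++ q) cat_path => /andP[].
  by case: (not_rho_ring5 (rho_path_ring wf deg2 u5 p5 rho)).
Qed.

End Classification.

Lemma rho_Pk k : (k <= 4)%N -> rho_lt_sqrt3 (gain (Pk k)).
Proof. by rewrite gain_Pk; apply: rho_path. Qed.

Lemma rho_C4eq : rho_lt_sqrt3 (gain C4eq).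
Proof. by rewrite (rho_T6_similar C4eq_similar); apply: rho_ring4_N1. Qed.

(** * Connected components *)

Section ClosedInjection.
Variables (S T : finType) (f : S -> T) (A : T -> T -> algC).
Hypothesis f_inj : injective f.
Hypothesis A_closed : forall i y, (forall j, f j != y) -> A (f i) y = 0 /\ A y (f i) = 0.

Lemma eigenvalue_extend_closed a :
  is_eigenvalue (fun i j => A (f i) (f j)) a -> is_eigenvalue A a.
Proof.
move=> [v [i vi] ev]; exists (extend f v); first by exists (f i); rewrite (extendE f_inj).
have vmulE y : vmul (extend f v) A y = \sum_j v j * A (f j) y.
  rewrite /vmul (sum_inj f_inj) => [|x /extend_out ->]; last by rewrite mul0r.
  by apply: eq_bigr => j _; rewrite (extendE f_inj).
move=> y; rewrite vmulE; have [/imsetP[j _ ->]|yS] := boolP (y \in f @: S).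
  by rewrite (extendE f_inj) -ev.
rewrite extend_out // mulr0 big1 // => j _.
suff /(A_closed j)[-> _] : forall k, f k != y by rewrite mulr0.
by move=> k; apply: contraNneq yS => <-; apply: imset_f.
Qed.

Lemma eigenvalue_restrict_closed a v : (forall y, vmul v A y = a * v y) ->
  (exists i, v (f i) != 0) -> is_eigenvalue (fun i j => A (f i) (f j)) a.
Proof.
move=> ev vS; exists (fun i => v (f i)) => // j; rewrite -ev /vmul.
rewrite [RHS](sum_inj f_inj) // => x xS.
suff /(A_closed j)[_ ->] : forall k, f k != x by rewrite mulr0.
by move=> k; apply: contraNneq xS => <-; apply: imset_f.
Qed.

End ClosedInjection.

Section Components.
Variables (n : nat) (g : mgraph 'I_n).
Hypothesis wf : mixed_wf g.

Lemma comp_graph_wf v : mixed_wf (comp_graph g v).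
Proof. by case: wf => gdiag gsym; split=> [x|x y]; rewrite /comp_graph. Qed.

Definition comp_root v : comp_vert g v := exist _ v (connect0 _ v).

Lemma comp_graph_connected v (s t : comp_vert g v) : connect (madj (comp_graph g v)) s t.
Proof.
have sym := sym_connect_sym (madj_sym (comp_graph_wf v)).
suff root_conn u : connect (madj (comp_graph g v)) (comp_root v) u.
  by apply: connect_trans (root_conn t); rewrite sym root_conn.
pose reached :=
  [pred x | [exists u, (val u == x) && connect (madj (comp_graph g v)) (comp_root v) u]].
have reached_closed : closed (madj g) reached.
  apply: (intro_closed (sym_connect_sym (madj_sym wf))) => x y xy /existsP[w /andP[/eqP wx cw]].
  have cy : connect (madj g) v y by apply: connect_trans (valP w) _; rewrite wx connect1.
  apply/existsP; exists (exist _ y cy); rewrite eqxx /=.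
  by apply: connect_trans cw (connect1 _); rewrite /madj /comp_graph /= wx.
have := closed_connect reached_closed (valP u).
have -> : v \in reached by apply/existsP; exists (comp_root v); rewrite eqxx connect0.
by move=> /esym/existsP[w /andP[/eqP/val_inj <-]].
Qed.

Lemma comp_gain_closed v (s : comp_vert g v) y : (forall t : comp_vert g v, val t != y) ->
  gain g (val s) y = 0 /\ gain g y (val s) = 0.
Proof.
move=> yS; have ny : ~~ connect (madj g) v y.
  by apply/negP => cy; move: (yS (exist _ y cy)); rewrite eqxx.
have nadj : ~~ madj g (val s) y.
  by apply: contra ny => sy; apply: connect_trans (valP s) (connect1 sy).
by rewrite !gain_nadj // madj_sym.
Qed.

Lemma eigenvalue_comp_graph v a :
  is_eigenvalue (gain (comp_graph g v)) a -> is_eigenvalue (gain g) a.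
Proof. exact: (eigenvalue_extend_closed val_inj (@comp_gain_closed v)). Qed.

Lemma eigenvalue_some_comp_graph a :
  is_eigenvalue (gain g) a -> exists v, is_eigenvalue (gain (comp_graph g v)) a.
Proof.
move=> [w [x wx] ev]; exists x.
apply: (eigenvalue_restrict_closed val_inj (@comp_gain_closed x) ev).
by exists (comp_root x).
Qed.

End Components.

Theorem theorem6p5 (n : nat) (g : mgraph 'I_n) (wf : mixed_wf g) :
  (forall a : algC, eigenvalue (Nmat g) a -> `|a| < sqrtC 3) <->
  (forall v : 'I_n,
     sw_equiv (comp_graph g v) (Pk 1) \/ sw_equiv (comp_graph g v) (Pk 2) \/
     sw_equiv (comp_graph g v) (Pk 3) \/ sw_equiv (comp_graph g v) (Pk 4) \/
     sw_equiv (comp_graph g v) C4eq).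
Proof.
have -> : (forall a, eigenvalue (Nmat g) a -> `|a| < sqrtC 3) <-> rho_lt_sqrt3 (gain g).
  by split=> rho a ev; apply: rho; apply/eigenvalue_Nmat.
split=> [rho v|comps a /(eigenvalue_some_comp_graph wf) [v]].
- apply: (connected_classification (comp_root g v) (comp_graph_wf wf v)
                                    (comp_graph_connected wf (v := v))).
  by move=> b /(eigenvalue_comp_graph wf); apply: rho.
- apply: (_ : rho_lt_sqrt3 (gain (comp_graph g v))).
  by case: (comps v) => [|[|[|[|]]]] /rho_sw_equiv ->; first [exact: rho_C4eq | exact: rho_Pk].
Qed.
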